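(* Let $(G,S,\tau,\mu,c,\gamma)$ be a generalized network flow instance and $x\in\mathbb{R}_{\ge0}^E$ with $x_e\in[0,\mu_e]$ for every $e\in E$, and let $v\in V\setminus\{\tau\}$. Then the minimum cost of a fractional augmenting path from $v$ in $G^x$, assuming one exists, is attained by an augmenting path.
   Context: A generalized network flow instance: digraph $G=(V,E)$ without anti-parallel edges, sources $S\subseteq V$ with no incoming edges, sink $\tau\in V\setminus S$ with no outgoing edges, and for each edge $e$ a capacity $\mu_e>0$, cost $c_e>0$ and gain $\gamma_e>0$. Residual graph $G^x=(V,E^x)$ with parameters $\mu^x,c^x,\gamma^x$: for every $uv\in E$ with $x_{uv}<\mu_{uv}$ there is a forward edge $uv$ with $\mu^x_{uv}=\mu_{uv}-x_{uv}$, $c^x_{uv}=c_{uv}$, $\gamma^x_{uv}=\gamma_{uv}$; for every $uv\in E$ with $x_{uv}>0$ there is a backward edge $vu$ with $\mu^x_{vu}=\gamma_{uv}x_{uv}$, $c^x_{vu}=0$, $\gamma^x_{vu}=1/\gamma_{uv}$. A fractional augmenting path from $s\in V\setminus\{\tau\}$ in $G^x$ is a vector $f\in\mathbb{R}_{\ge0}^{E^x}$ (capacities are ignored) such that $\sum_{e\in\delta^+_{G^x}(w)}f_e-\sum_{e\in\delta^-_{G^x}(w)}\gamma^x_ef_e$ equals $1$ for $w=s$ and $0$ for $w\in V\setminus\{s,\tau\}$; its cost is $\sum_{e\in E^x}c^x_ef_e$. It is an augmenting path if moreover its support is (a) a path from $s$ to $\tau$ in $G^x$, or (b) a cycle in $G^x$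 containing $s$ but not $\tau$, or (c) the union of a cycle $C$ in $G^x$ containing neither $s$ nor $\tau$ and a path in $G^x$ from $s$ to $C$ internally disjoint from $C$. *)

From HB Require Import structures.
From mathcomp Require Import all_boot all_order all_algebra.
Set Implicit Arguments. Unset Strict Implicit. Unset Printing Implicit Defensive.
Import Order.TTheory GRing.Theory Num.Theory.
Local Open Scope ring_scope.

(* A digraph on a finite vertex type V is given by its edge relation E;
   an edge uv is the pair (u,w) with E u w.  Edge parameters (capacity,
   cost, gain) and flows are functions V -> V -> R, only relevant on edges. *)

Section GNF.
Variables (R : realFieldType) (V : finType).

Definition gnf_instance (E : rel V) (S : {set V}) (tau : V)
  (mu c gamma : V -> V -> R) : Prop :=
  [/\ (forall u w, E u w -> ~~ E w u),
      (forall s u, s \in S -> ~~ E u s),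
      tau \notin S,
      (forall u, ~~ E tau u)
    & (forall u w, E u w -> [/\ 0 < mu u w, 0 < c u w & 0 < gamma u w])].

Definition feasible_x (E : rel V) (mu x : V -> V -> R) : Prop :=
  forall u w, E u w -> 0 <= x u w <= mu u w.

(* residual graph G^x: forward edge uw if x_uw < mu_uw, backward edge wu
   if x_uw > 0 (no anti-parallel edges, so these never collide) *)
Definition res_edge (E : rel V) (mu x : V -> V -> R) : rel V :=
  fun u w => (E u w && (x u w < mu u w)) || (E w u && (0 < x w u)).

Definition res_cost (E : rel V) (c : V -> V -> R) (u w : V) : R :=
  if E u w then c u w else 0.

Definition res_gain (E : rel V) (gamma : V -> V -> R) (u w : V) : R :=
  if E u w then gamma u w else (gamma w u)^-1.

(* fractional augmenting path from s in G^x: f >= 0 on E^x, zero outside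
   E^x (f is a vector indexed by E^x), with gain-flow conservation *)
Definition frac_aug_path (E : rel V) (tau : V) (mu gamma x f : V -> V -> R)
  (s : V) : Prop :=
  let Ex := res_edge E mu x in
  [/\ (forall u w, 0 <= f u w),
      (forall u w, ~~ Ex u w -> f u w = 0)
    & (forall w, w != tau ->
         \sum_(u | Ex w u) f w u - \sum_(u | Ex u w) res_gain E gamma u w * f u w
         = (if w == s then 1 else 0))].

Definition flow_cost (E : rel V) (mu c x f : V -> V -> R) : R :=
  \sum_(u : V) \sum_(w | res_edge E mu x u w) res_cost E c u w * f u w.

Definition supp (f : V -> V -> R) : rel V := fun u w => f u w != 0.

Definition simple_path (Ex : rel V) (s : V) (p : seq V) : bool :=
  path Ex s p && uniq (s :: p).

Definition simple_cycle (Ex : rel V) (C : seq V) : bool :=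
  [&& C != [::], cycle Ex C & uniq C].

Definition path_edges (s : V) (p : seq V) : seq (V * V) := zip (s :: p) p.
Definition cycle_edges (C : seq V) : seq (V * V) := zip C (rot 1 C).

Definition aug_support (Ex : rel V) (tau s : V) (F : rel V) : Prop :=
  (exists p, [/\ simple_path Ex s p, last s p = tau &
                 forall u w, F u w = ((u, w) \in path_edges s p)])
  \/
  (exists C, [/\ simple_cycle Ex C, s \in C, tau \notin C &
                 forall u w, F u w = ((u, w) \in cycle_edges C)])
  \/
  (exists C p, [/\ [&& simple_cycle Ex C, s \notin C & tau \notin C],
                   simple_path Ex s p,
                   last s p \in C,
                   all (fun u => u \notin C) (belast s p) &
                   forall u w, F u w =
                     ((u, w) \in cycle_edges C ++ path_edges s p)]).

Definition aug_path (E : rel V) (tau : V) (mu gamma x f : V -> V -> R)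
  (s : V) : Prop :=
  frac_aug_path E tau mu gamma x f s /\
  aug_support (res_edge E mu x) tau s (supp f).

End GNF.

From HB Require Import structures.
From mathcomp Require Import all_boot all_order all_algebra.
From mathcomp Require Import ring lra.
Set Implicit Arguments. Unset Strict Implicit. Unset Printing Implicit Defensive.
Import Order.TTheory GRing.Theory Num.Theory.
Local Open Scope ring_scope.

(* Following the support of a fractional augmenting path f from its source either reaches
   tau along a simple path or closes a cycle, giving a "lollipop": a stem from the source to
   some r, then a cycle through r.  The gain flow along the path, or along the stem plus k
   times the cycle with k = gain(stem) / (1 - gain(cycle)), has the same excesses as f.  If
   it is an augmenting path (cycle gain < 1) at least as cheap as f, it dominates f.
   Otherwise its difference with f, or the cycle flow alone when the cycle gain is 1, is a
   nonzero circulation supported in supp f; since costs are nonnegative, moving f along it or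
   its opposite until a coordinate vanishes gives a fractional augmenting path that is no
   more expensive and has smaller support.  By induction on the support, every fractional
   augmenting path is dominated by one of the finitely many simple paths and lollipops on V,
   and the cheapest of those that are augmenting paths is a minimum. *)

Lemma seq_ex_argmin (T : choiceType) (R : realDomainType) (l : seq T)
    (P : pred T) (F : T -> R) (y0 : T) :
  y0 \in l -> P y0 ->
  exists2 y, P y & forall z, z \in l -> P z -> F y <= F z.
Proof.
move=> y0l Py0.
case: (@arg_minP _ _ (seq_sub l) (SeqSub y0l) (fun y => P (ssval y))
  (fun y => F (ssval y)) Py0) => -[y yl] /= Py Fmin.
by exists y => // z zl; apply: (Fmin (SeqSub zl)).
Qed.

Fixpoint short_seqs (T : finType) (k : nat) : seq (seq T) :=
  if k is k'.+1 then [::] :: [seq y :: l | y <- enum T, l <- short_seqs T k']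
  else [:: [::]].

Lemma mem_short_seqs (T : finType) k (l : seq T) :
  (size l <= k)%N -> l \in short_seqs T k.
Proof.
elim: k l => [|k IH] [|y l] //=; rewrite ?in_cons ?eqxx // ltnS => /IH lk.
by apply/orP; right; apply/allpairsP; exists (y, l); rewrite mem_enum.
Qed.

Lemma uniq_size_card (T : finType) (l : seq T) : uniq l -> (size l <= #|T|)%N.
Proof. by move=> ul; rewrite -(card_uniqP ul) max_card. Qed.

Lemma mem_zip_path (T : eqType) (e : rel T) a l u w :
  path e a l -> (u, w) \in zip (a :: l) l -> e u w.
Proof.
elim: l a => [|y l IH] a //= /andP[eay pl].
by rewrite in_cons => /orP[/eqP[-> ->] //|]; apply: IH.
Qed.

Lemma mem_zip_belast (T : eqType) (a : T) l u w :
  (u, w) \in zip (a :: l) l -> u \in belast a l.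
Proof.
elim: l a => [|y l IH] a //=.
by rewrite !in_cons => /orP[/eqP[-> _]|/IH ->]; rewrite ?eqxx ?orbT.
Qed.

Lemma last_notin_belast (T : eqType) (a : T) l :
  uniq (a :: l) -> last a l \notin belast a l.
Proof. by rewrite lastI rcons_uniq => /andP[]. Qed.

Lemma zip_cons_rcons (T : Type) (a z : T) l :
  zip (a :: rcons l z) (rcons l z) = zip (a :: l) (rcons l z).
Proof. by elim: l a => [|y l IH] a //=; rewrite IH. Qed.

Section Walk.
Variables (T : finType) (e : rel T) (s t : T).
Hypothesis out_edge :
  forall w, w != t -> (w = s \/ exists u, e u w) -> exists y, e w y.

Lemma path_or_lollipop p : path e s p -> uniq (s :: p) -> t \notin s :: p ->
  (exists p, [/\ path e s p, uniq (s :: p) & last s p = t]) \/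
  (exists a b, [/\ path e s (a ++ b), uniq (s :: a ++ b), t \notin s :: a ++ b
                 & e (last s (a ++ b)) (last s a)]).
Proof.
have [n] := ubnP (#|T| - size p).
elim: n p => // n IH p /ltnSE bound ep up tp.
have [y ey] : exists y, e (last s p) y.
  apply: out_edge; first by apply: contraNneq tp => <-; apply: mem_last.
  case/lastP: p ep {bound up tp} => [|p z]; first by left.
  by rewrite rcons_path last_rcons => /andP[_ ez]; right; exists (last s p).
have [ysp|ysp] := boolP (y \in s :: p).
  right; move: ysp; rewrite in_cons => /predU1P[ys|ysp].
    by exists [::], p; rewrite ys in ey.
  case/splitPr: ysp ep up tp ey => p1 p2 ep up tp ey.
  by exists (rcons p1 y), p2; rewrite cat_rcons last_rcons.
have ep' : path e s (rcons p y) by rewrite rcons_path ep.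
have up' : uniq (s :: rcons p y) by rewrite -rcons_cons rcons_uniq ysp.
have [yt|yt] := eqVneq y t; first by left; exists (rcons p y); rewrite last_rcons.
apply: (IH (rcons p y)) => //; last by rewrite -rcons_cons mem_rcons inE negb_or eq_sym yt.
apply: leq_trans bound; rewrite size_rcons ltn_sub2l //.
by have := uniq_size_card up'; rewrite /= size_rcons => /ltnW.
Qed.

End Walk.

Lemma lollipop_pathP (T : eqType) (e : rel T) s a b :
  path e s (a ++ b) -> e (last s (a ++ b)) (last s a) ->
  path e s a /\ path e (last s a) (rcons b (last s a)).
Proof. by rewrite cat_path last_cat rcons_path => /andP[-> ->] ->. Qed.

Section AugSupport.
Variables (V : finType) (e : rel V) (tau s : V).

Lemma aug_support_path (F : rel V) p :
  path e s p -> uniq (s :: p) -> last s p = tau ->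
  (forall u w, F u w = ((u, w) \in zip (s :: p) p)) -> aug_support e tau s F.
Proof. by move=> ep up pt Fp; left; exists p; split=> //; apply/andP. Qed.

Lemma aug_support_lollipop (F : rel V) a b :
  path e s (a ++ b) -> uniq (s :: a ++ b) -> tau \notin s :: a ++ b ->
  e (last s (a ++ b)) (last s a) ->
  (forall u w, F u w = ((u, w) \in zip (s :: a) a) ||
     ((u, w) \in zip (last s a :: rcons b (last s a)) (rcons b (last s a)))) ->
  aug_support e tau s F.
Proof.
set r := last s a => eab uab tab er Fab.
have [ea ec] := lollipop_pathP eab er.
have split_ab : s :: a ++ b = belast s a ++ r :: b by rewrite -cat_cons lastI cat_rcons.
move: (uab) tab; rewrite split_ab cat_uniq mem_cat negb_or.
move=> /and3P[_ /hasPn disj urb] /andP[_ trb].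
have C_rb : simple_cycle e (r :: b) by rewrite /simple_cycle /= ec.
have edges_rb u w : ((u, w) \in zip (r :: rcons b r) (rcons b r)) =
                    ((u, w) \in cycle_edges (r :: b)).
  by rewrite /cycle_edges rot1_cons zip_cons_rcons.
have [a0|a_ne0] := eqVneq a [::].
  have rs : r = s by rewrite /r a0.
  right; left; exists (r :: b); split=> //; first by rewrite rs mem_head.
  by move=> u w; rewrite Fab edges_rb a0.
have s_belast : s \in belast s a by case: (a) a_ne0 => //= *; rewrite mem_head.
right; right; exists (r :: b), a; split.
- by rewrite C_rb trb (contraL (disj s) s_belast).
- by rewrite /simple_path ea; move: uab; rewrite -cat_cons cat_uniq => /andP[].
- exact: mem_head.
- by apply/allP => z /(contraL (disj z)).
- by move=> u w; rewrite Fab mem_cat orbC edges_rb.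
Qed.

End AugSupport.

Section GainFlows.
Variables (R : realFieldType) (V : finType) (E : rel V) (tau : V)
  (mu c gamma x : V -> V -> R) (s : V).
Hypothesis gamma_gt0 : forall u w, E u w -> 0 < gamma u w.
Hypothesis c_ge0 : forall u w, E u w -> 0 <= c u w.

Local Notation Ex := (res_edge E mu x).
Local Notation gain := (res_gain E gamma).
Local Notation cost := (flow_cost E mu c x).
Local Notation frac_aug f := (frac_aug_path E tau mu gamma x f s).
Local Notation aug f := (aug_path E tau mu gamma x f s).

Definition excess (f : V -> V -> R) (w : V) : R :=
  \sum_(u | Ex w u) f w u - \sum_(u | Ex u w) gain u w * f u w.

Definition circulation (d : V -> V -> R) : Prop :=
  forall w, w != tau -> excess d w = 0.

Definition support_size (f : V -> V -> R) : nat :=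
  #|[set e : V * V | f e.1 e.2 != 0]|.

Lemma subrel_supp_eq0 (f g : V -> V -> R) u w :
  subrel (supp g) (supp f) -> f u w = 0 -> g u w = 0.
Proof. by move=> gsub fz; apply: contraTeq isT => /gsub; rewrite /supp fz eqxx. Qed.

Lemma res_gain_gt0 u w : Ex u w -> 0 < gain u w.
Proof.
rewrite /res_edge /res_gain => /orP[/andP[Euw _]|/andP[Ewu _]].
  by rewrite Euw gamma_gt0.
by case: ifP => [/gamma_gt0 //|_]; rewrite invr_gt0 gamma_gt0.
Qed.

Lemma res_cost_ge0 u w : 0 <= res_cost E c u w.
Proof. by rewrite /res_cost; case: ifP => // /c_ge0. Qed.

Lemma excessD f g w :
  excess (fun u w => f u w + g u w) w = excess f w + excess g w.
Proof.
rewrite /excess (eq_bigr _ (fun u _ => mulrDr _ _ _)) !big_split /=; ring.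
Qed.

Lemma excessZ k f w : excess (fun u w => k * f u w) w = k * excess f w.
Proof.
rewrite /excess (eq_bigr _ (fun u _ => mulrCA _ k _)) -!mulr_sumr; ring.
Qed.

Lemma excessN f w : excess (fun u w => - f u w) w = - excess f w.
Proof.
rewrite /excess (eq_bigr _ (fun u _ => mulrN _ _)) !sumrN; ring.
Qed.

Lemma circulationN d : circulation d -> circulation (fun u w => - d u w).
Proof. by move=> dcirc w /dcirc; rewrite excessN => ->; rewrite oppr0. Qed.

Lemma flow_costD f g : cost (fun u w => f u w + g u w) = cost f + cost g.
Proof.
rewrite /flow_cost -big_split; apply: eq_bigr => u _.
by rewrite -big_split; apply: eq_bigr => w _; rewrite mulrDr.
Qed.

Lemma flow_costZ k f : cost (fun u w => k * f u w) = k * cost f.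
Proof.
rewrite /flow_cost mulr_sumr; apply: eq_bigr => u _.
by rewrite mulr_sumr; apply: eq_bigr => w _; rewrite mulrCA.
Qed.

Lemma flow_costN f : cost (fun u w => - f u w) = - cost f.
Proof.
rewrite /flow_cost -sumrN; apply: eq_bigr => u _.
by rewrite -sumrN; apply: eq_bigr => w _; rewrite mulrN.
Qed.

Lemma flow_cost_ge0 f : (forall u w, 0 <= f u w) -> 0 <= cost f.
Proof.
move=> f_ge0; apply: sumr_ge0 => u _; apply: sumr_ge0 => w _.
by rewrite mulr_ge0 ?res_cost_ge0.
Qed.

Lemma flow_cost_neq0 f : cost f != 0 -> exists u w, f u w != 0.
Proof.
case: (pickP (fun e : V * V => f e.1 e.2 != 0)) => [[u w] nz _|f0]; first by exists u, w.
rewrite /flow_cost big1 ?eqxx // => u _; rewrite big1 // => w _.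
by move/negbFE/eqP: (f0 (u, w)) => /= ->; rewrite mulr0.
Qed.

Lemma frac_augP f : frac_aug f <->
  [/\ forall u w, 0 <= f u w, forall u w, ~~ Ex u w -> f u w = 0
     & forall w, w != tau -> excess f w = if w == s then 1 else 0].
Proof. by []. Qed.

Lemma frac_aug_supp f : frac_aug f -> subrel (supp f) Ex.
Proof. by move=> [_ f_out _] u w; apply: contraTT => /f_out; rewrite /supp negbK => ->. Qed.

Lemma frac_aug_path_supp f a l : frac_aug f -> path (supp f) a l -> path Ex a l.
Proof. by move=> fa; apply: sub_path; apply: frac_aug_supp. Qed.

Lemma frac_aug_out_edge f : frac_aug f -> forall w, w != tau ->
  (w = s \/ exists u, supp f u w) -> exists y, supp f w y.
Proof.
move=> fa w wt w_in; have [f_ge0 _ f_bal] := fa.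
case: (pickP (supp f w)) => [y fy|out0]; first by exists y.
have inflow_ge0 : 0 <= \sum_(u | Ex u w) gain u w * f u w.
  by apply: sumr_ge0 => u Euw; rewrite mulr_ge0 ?f_ge0 // ltW // res_gain_gt0.
have := f_bal w wt; rewrite big1 => [|y _]; last exact/eqP/negbFE/out0.
case: w_in inflow_ge0 => [->|[u fuw]] inflow_ge0; first by rewrite eqxx; lra.
have Euw := frac_aug_supp fa fuw.
have : 0 < gain u w * f u w by rewrite mulr_gt0 ?res_gain_gt0 // lt0r f_ge0 andbT.
have : gain u w * f u w <= \sum_(u | Ex u w) gain u w * f u w.
  rewrite (bigD1 u) //= lerDl sumr_ge0 // => v /andP[Evw _].
  by rewrite mulr_ge0 ?f_ge0 // ltW // res_gain_gt0.
by case: ifP => _; lra.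
Qed.

Definition support_reducible f : Prop :=
  exists h, [/\ frac_aug h, cost h <= cost f & (support_size h < support_size f)%N].

Lemma support_reducible_descent f d u0 w0 : frac_aug f ->
  subrel (supp d) (supp f) -> circulation d -> cost d <= 0 -> d u0 w0 < 0 ->
  support_reducible f.
Proof.
move/frac_augP=> [f_ge0 f_out f_bal] dsub dcirc dcost neg0.
have d0 u w : f u w = 0 -> d u w = 0 by apply: subrel_supp_eq0.
case: (@arg_minP _ _ _ (u0, w0) (fun e => d e.1 e.2 < 0)
  (fun e => f e.1 e.2 / - d e.1 e.2) neg0) => -[u1 w1] /= neg1 ratio_min.
set t := f u1 w1 / - d u1 w1.
have t_ge0 : 0 <= t by rewrite divr_ge0 // oppr_ge0 ltW.
exists (fun u w => f u w + t * d u w); split.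
- apply/frac_augP; split=> [u w|u w nE|w wt].
  + have [neg|] := ltrP (d u w) 0; last by move=> d_ge0; rewrite addr_ge0 ?f_ge0 // mulr_ge0.
    have := ratio_min (u, w) neg; rewrite /= ler_pdivlMr ?oppr_gt0 //.
    by rewrite -/t mulrN; lra.
  + by rewrite f_out // d0 ?f_out // mulr0 addr0.
  + by rewrite excessD excessZ f_bal // dcirc // mulr0 addr0.
- by rewrite flow_costD flow_costZ gerDl mulr_ge0_le0.
- apply: proper_card; apply/properP; split.
    apply/subsetP => -[u w]; rewrite !inE /=; apply: contraNN => /eqP fz.
    by rewrite fz d0 // mulr0 addr0.
  exists (u1, w1); rewrite !inE /=.
    by apply/eqP => /d0 d1; rewrite d1 ltxx in neg1.
  by rewrite /t invrN mulrN mulNr divfK ?subrr ?eqxx // lt_eqF.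
Qed.

Lemma support_reducible_circulation f d u0 w0 : frac_aug f ->
  subrel (supp d) (supp f) -> circulation d -> d u0 w0 != 0 ->
  support_reducible f.
Proof.
move=> fa; wlog dcost : d / cost d <= 0 => [wlog_cost dsub dcirc nz0|dsub dcirc nz0].
  have [dcost|dcost] := lerP (cost d) 0; first exact: (wlog_cost d).
  apply: (wlog_cost (fun u w => - d u w) _ _ (circulationN dcirc));
    rewrite ?flow_costN ?oppr_le0 ?ltW ?oppr_eq0 //.
  by move=> u w; rewrite /supp oppr_eq0; apply: dsub.
case: (pickP (fun e : V * V => d e.1 e.2 < 0)) => [[u w] /= neg|nonneg].
  exact: support_reducible_descent neg.
(* A nonnegative [d] has nonnegative, hence zero, cost: then [- d] is a descent direction. *)
have d_ge0 u w : 0 <= d u w by rewrite leNgt (nonneg (u, w)).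
apply: (@support_reducible_descent f (fun u w => - d u w) u0 w0) => //.
- by move=> u w; rewrite /supp oppr_eq0; apply: dsub.
- exact: circulationN.
- by rewrite flow_costN oppr_le0 flow_cost_ge0.
- by rewrite oppr_lt0 lt0r nz0 d_ge0.
Qed.

Lemma support_reducible_balanced f g u0 w0 : frac_aug f ->
  subrel (supp g) (supp f) ->
  (forall w, w != tau -> excess g w = if w == s then 1 else 0) ->
  f u0 w0 != g u0 w0 -> support_reducible f.
Proof.
move=> fa gsub g_bal fg0; have [_ _ f_bal] := (frac_augP f).1 fa.
apply: (@support_reducible_circulation f (fun u w => f u w - g u w) u0 w0) => //.
- move=> u w; apply: contraNneq => fz.
  by rewrite fz (subrel_supp_eq0 gsub fz) subrr.
- by move=> w wt; rewrite excessD excessN f_bal // g_bal // subrr.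
- by rewrite subr_eq0.
Qed.

Lemma cheaper_or_support_reducible f g : frac_aug f -> frac_aug g ->
  subrel (supp g) (supp f) -> cost g <= cost f \/ support_reducible f.
Proof.
move=> fa ga gsub; have [|gf] := lerP (cost g) (cost f); first by left.
have [_ _ g_bal] := (frac_augP g).1 ga.
have [u [w nz]] : exists u w, f u w - g u w != 0.
  by apply: flow_cost_neq0; rewrite flow_costD flow_costN subr_eq0 lt_eqF.
right; apply: (support_reducible_balanced (u0 := u) (w0 := w) fa gsub g_bal).
by rewrite -subr_eq0.
Qed.

Fixpoint path_flow (a : V) (l : seq V) : V -> V -> R :=
  if l is y :: l' then
    fun u w => (if (u == a) && (w == y) then 1 else 0) + gain a y * path_flow y l' u w
  else fun _ _ => 0.

Fixpoint path_gain (a : V) (l : seq V) : R :=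
  if l is y :: l' then gain a y * path_gain y l' else 1.

Lemma excess_edge a y w : Ex a y ->
  excess (fun u w => if (u == a) && (w == y) then 1 else 0) w =
  (if w == a then 1 else 0) - gain a y * (if w == y then 1 else 0).
Proof.
move=> Eay; rewrite /excess; congr (_ - _).
  have [->|wa] := eqVneq w a; last by rewrite big1 // => u _; rewrite (negbTE wa).
  by rewrite (bigD1 y) //= !eqxx big1 ?addr0 // => u /andP[_ /negbTE ->].
have [->|wy] := eqVneq w y; last by rewrite mulr0 big1 // => u _; rewrite andbF mulr0.
rewrite (bigD1 a) //= !eqxx mulr1 big1 ?addr0 // => u /andP[_ /negbTE ->].
by rewrite mulr0.
Qed.

Lemma excess_path_flow a l w : path Ex a l ->
  excess (path_flow a l) w =
  (if w == a then 1 else 0) - path_gain a l * (if w == last a l then 1 else 0).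
Proof.
elim: l a => [|y l IH] a /=.
  by move=> _; rewrite /excess !big1 ?mul1r ?subrr // => u _; rewrite mulr0.
move=> /andP[Eay pl]; rewrite excessD excessZ excess_edge // IH //.
by case: (w == a); case: (w == y); case: (w == last y l); ring.
Qed.

Lemma path_gain_gt0 a l : path Ex a l -> 0 < path_gain a l.
Proof.
by elim: l a => [|y l IH] a //= /andP[Eay pl]; rewrite mulr_gt0 ?res_gain_gt0 ?IH.
Qed.

Lemma path_flow_ge0 a l u w : path Ex a l -> 0 <= path_flow a l u w.
Proof.
elim: l a => [|y l IH] a //= /andP[Eay pl].
rewrite addr_ge0 //; first by case: ifP.
by rewrite mulr_ge0 ?IH // ltW // res_gain_gt0.
Qed.

Lemma path_flow_neq0 a l u w : path Ex a l ->
  (path_flow a l u w != 0) = ((u, w) \in zip (a :: l) l).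
Proof.
elim: l a => [|y l IH] a /=; first by rewrite eqxx.
move=> /andP[Eay pl]; rewrite paddr_eq0; first last.
- by rewrite mulr_ge0 ?path_flow_ge0 // ltW // res_gain_gt0.
- by case: ifP.
rewrite negb_and mulf_eq0 (gt_eqF (res_gain_gt0 Eay)) /= IH // in_cons xpair_eqE.
by case: andP; rewrite ?eqxx ?oner_eq0.
Qed.

Lemma subrel_path_flow f a l : frac_aug f -> path (supp f) a l ->
  subrel (supp (path_flow a l)) (supp f).
Proof.
move=> fa pf u w; rewrite /supp path_flow_neq0; first exact: mem_zip_path pf.
exact: frac_aug_path_supp pf.
Qed.

Lemma path_flow_out a l u w : path Ex a l -> ~~ Ex u w -> path_flow a l u w = 0.
Proof.
move=> pl; apply: contraNeq; rewrite path_flow_neq0 //; exact: mem_zip_path pl.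
Qed.

Lemma path_flow_aug p : path Ex s p -> uniq (s :: p) -> last s p = tau ->
  aug (path_flow s p).
Proof.
move=> pp up pt; split; last first.
  by apply: (aug_support_path pp up pt) => u w; rewrite /supp path_flow_neq0.
apply/frac_augP; split=> [u w|u w|w wt]; [exact: path_flow_ge0|exact: path_flow_out|].
by rewrite excess_path_flow // pt (negbTE wt) mulr0 subr0.
Qed.

Section Lollipop.
Variables a b : seq V.
Let r := last s a.
Let cycle_gain := path_gain r (rcons b r).

(* The flow [k] sent round the cycle balances [r]: [k = path_gain s a + cycle_gain * k]. *)
Definition lollipop_coef : R := path_gain s a / (1 - cycle_gain).

Definition lollipop_flow : V -> V -> R :=
  fun u w => path_flow s a u w + lollipop_coef * path_flow r (rcons b r) u w.

Lemma excess_lollipop_flow w : path Ex s a -> path Ex r (rcons b r) ->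
  cycle_gain != 1 -> excess lollipop_flow w = if w == s then 1 else 0.
Proof.
move=> pa pc G1; rewrite excessD excessZ !excess_path_flow // last_rcons.
have : 1 - cycle_gain != 0 by rewrite subr_eq0 eq_sym.
by rewrite /lollipop_coef -/r -/cycle_gain; case: (w == s); case: (w == r) => ?; field.
Qed.

Lemma lollipop_flow_aug :
  path Ex s (a ++ b) -> uniq (s :: a ++ b) -> tau \notin s :: a ++ b ->
  Ex (last s (a ++ b)) r -> cycle_gain < 1 -> aug lollipop_flow.
Proof.
move=> pab uab tab er G1; have [pa pc] := lollipop_pathP pab er.
have coef_gt0 : 0 < lollipop_coef by rewrite divr_gt0 ?path_gain_gt0 // subr_gt0.
have qflow_ge0 u w : 0 <= lollipop_coef * path_flow r (rcons b r) u w.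
  by rewrite mulr_ge0 ?path_flow_ge0 // ltW.
split.
  apply/frac_augP; split=> [u w|u w nE|w _].
  - by rewrite addr_ge0 ?path_flow_ge0.
  - by rewrite /lollipop_flow !path_flow_out // mulr0 addr0.
  - by rewrite excess_lollipop_flow // lt_eqF.
apply: (aug_support_lollipop pab uab tab er) => u w.
rewrite /supp /lollipop_flow paddr_eq0 ?path_flow_ge0 // negb_and.
by rewrite mulf_eq0 (gt_eqF coef_gt0) /= !path_flow_neq0.
Qed.

Lemma subrel_lollipop_flow f : frac_aug f ->
  path (supp f) s a -> path (supp f) r (rcons b r) ->
  subrel (supp lollipop_flow) (supp f).
Proof.
move=> fa fpa fpc u w; apply: contraNneq => fz; rewrite /lollipop_flow.
rewrite (subrel_supp_eq0 (subrel_path_flow fa fpa) fz).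
by rewrite (subrel_supp_eq0 (subrel_path_flow fa fpc) fz) mulr0 addr0.
Qed.

Lemma lollipop_first_cycle_edge : path Ex s a -> path Ex r (rcons b r) ->
  uniq (s :: a) -> exists y, path_flow s a r y = 0 /\ 0 < path_flow r (rcons b r) r y.
Proof.
move=> pa pc ua.
have [y [l cE]] : exists y l, rcons b r = y :: l by case: (b) => [|z b']; eexists; eexists.
exists y; split; last by rewrite lt0r path_flow_ge0 // path_flow_neq0 // cE mem_head.
apply/eqP; apply: contraNT (last_notin_belast ua).
by rewrite path_flow_neq0 // => /mem_zip_belast.
Qed.

End Lollipop.

(* [inl p] is the path [s :: p] to [tau]; [inr (a, b)] is the lollipop with stem [s :: a]
   and cycle [last s a :: b]. *)
Definition candidate := (seq V + seq V * seq V)%type.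

Definition candidate_flow (W : candidate) : V -> V -> R :=
  match W with inl p => path_flow s p | inr (a, b) => lollipop_flow a b end.

Definition is_aug_candidate (W : candidate) : bool :=
  match W with
  | inl p => [&& path Ex s p, uniq (s :: p) & last s p == tau]
  | inr (a, b) =>
      [&& path Ex s (a ++ b), uniq (s :: a ++ b), tau \notin s :: a ++ b,
          Ex (last s (a ++ b)) (last s a)
        & path_gain (last s a) (rcons b (last s a)) < 1]
  end.

Definition candidates : seq candidate :=
  [seq inl p | p <- short_seqs V #|V|] ++
  [seq inr (a, b) | a <- short_seqs V #|V|, b <- short_seqs V #|V|].

Lemma candidate_flow_aug W : is_aug_candidate W -> aug (candidate_flow W).
Proof.
case: W => [p /and3P[pp up /eqP pt]|[a b] /and5P[]]; first exact: path_flow_aug.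
exact: lollipop_flow_aug.
Qed.

Lemma mem_candidates W : is_aug_candidate W -> W \in candidates.
Proof.
have short l : uniq l -> l \in short_seqs V #|V|.
  by move=> ul; apply/mem_short_seqs/uniq_size_card.
rewrite mem_cat; case: W => [p /and3P[_ /andP[_ up] _]|[a b] /and5P[_ uab _ _ _]].
  by rewrite map_f ?short.
move: uab; rewrite /= cat_uniq => /andP[_ /and3P[ua _ ub]].
by rewrite allpairs_f ?short ?orbT.
Qed.

Definition dominated f : Prop :=
  exists2 W, is_aug_candidate W & cost (candidate_flow W) <= cost f.

Lemma path_dominated_or_support_reducible f p : frac_aug f ->
  path (supp f) s p -> uniq (s :: p) -> last s p = tau ->
  dominated f \/ support_reducible f.
Proof.
move=> fa fp up pt; have pp := frac_aug_path_supp fa fp.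
have [cheaper|] := cheaper_or_support_reducible fa (path_flow_aug pp up pt).1
  (subrel_path_flow fa fp); last by right.
by left; exists (inl p) => //; apply/and3P; split=> //; apply/eqP.
Qed.

Lemma lollipop_dominated_or_support_reducible f a b : frac_aug f ->
  path (supp f) s (a ++ b) -> uniq (s :: a ++ b) -> tau \notin s :: a ++ b ->
  supp f (last s (a ++ b)) (last s a) -> dominated f \/ support_reducible f.
Proof.
set r := last s a; set G := path_gain r (rcons b r) => fa fab uab tab fr.
have [fpa fpc] := lollipop_pathP fab fr.
have pab := frac_aug_path_supp fa fab; have er := frac_aug_supp fa fr.
have [pa pc] := lollipop_pathP pab er.
have g_sub := subrel_lollipop_flow fa fpa fpc.
have ua : uniq (s :: a) by move: uab; rewrite -cat_cons cat_uniq => /andP[].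
have [y [p_ry q_ry]] := lollipop_first_cycle_edge pa pc ua.
have [G_lt1|G_gt1|G_eq1] := ltrgtP G 1.
- have [cheaper|] := cheaper_or_support_reducible fa
    (lollipop_flow_aug pab uab tab er G_lt1).1 g_sub; last by right.
  by left; exists (inr (a, b)) => //; apply/and5P.
- right; apply: (support_reducible_balanced (u0 := r) (w0 := y) fa g_sub).
    by move=> w _; rewrite excess_lollipop_flow // gt_eqF.
  have coef_lt0 : lollipop_coef a b < 0.
    by rewrite /lollipop_coef -/r -/G pmulr_rlt0 ?path_gain_gt0 // invr_lt0 subr_lt0.
  have [f_ge0 _ _] := (frac_augP f).1 fa.
  rewrite /lollipop_flow -/r p_ry add0r gt_eqF // (lt_le_trans _ (f_ge0 r y)) //.
  by rewrite nmulr_rlt0.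
- right; apply: (support_reducible_circulation (u0 := r) (w0 := y) fa
    (subrel_path_flow fa fpc)).
    by move=> w _; rewrite excess_path_flow // last_rcons -/G G_eq1 mul1r subrr.
  by rewrite gt_eqF.
Qed.

Lemma dominated_or_support_reducible f : s != tau -> frac_aug f ->
  dominated f \/ support_reducible f.
Proof.
move=> st fa; have ts : tau \notin [:: s] by rewrite inE eq_sym.
have [[p [fp up pt]]|[a [b [fab uab tab fr]]]] :=
  path_or_lollipop (frac_aug_out_edge fa) (p := [::]) isT isT ts.
  exact: path_dominated_or_support_reducible fa fp up pt.
exact: lollipop_dominated_or_support_reducible fa fab uab tab fr.
Qed.

Lemma frac_aug_dominated f : s != tau -> frac_aug f -> dominated f.
Proof.
move=> st; have [n] := ubnP (support_size f); elim: n f => // n IH f /ltnSE f_size fa.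
have [//|[h [ha h_cost h_size]]] := dominated_or_support_reducible st fa.
have [W W_aug W_cost] := IH h (leq_trans h_size f_size) ha.
by exists W => //; apply: le_trans h_cost.
Qed.

Lemma ex_min_cost_aug_path : s != tau -> (exists f, frac_aug f) ->
  exists f, aug f /\ forall g, frac_aug g -> cost f <= cost g.
Proof.
move=> st [f0 fa0]; have [W0 W0_aug _] := frac_aug_dominated st fa0.
have [W W_aug W_min] := seq_ex_argmin (fun W => cost (candidate_flow W))
  (mem_candidates W0_aug) W0_aug.
exists (candidate_flow W); split=> [|g ga]; first exact: candidate_flow_aug.
have [W' W'_aug W'_cost] := frac_aug_dominated st ga.
exact: le_trans (W_min W' (mem_candidates W'_aug) W'_aug) W'_cost.
Qed.

End GainFlows.

Theorem lemma1 (R : realFieldType) (V : finType) (E : rel V) (S : {set V})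
  (tau : V) (mu c gamma x : V -> V -> R) (v : V) :
  gnf_instance E S tau mu c gamma ->
  feasible_x E mu x ->
  v != tau ->
  (exists f, frac_aug_path E tau mu gamma x f v) ->
  exists f, aug_path E tau mu gamma x f v /\
    forall g, frac_aug_path E tau mu gamma x g v ->
      flow_cost E mu c x f <= flow_cost E mu c x g.
Proof.
case=> _ _ _ _ edge_pos _.
have gamma_gt0 u w : E u w -> 0 < gamma u w by case/edge_pos.
have c_ge0 u w : E u w -> 0 <= c u w by case/edge_pos => _ /ltW.
exact: ex_min_cost_aug_path.
Qed.
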